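(* If $(G,\sigma)$ is a signed graph and $(F,\pi)$ is a signed forest with at least one edge, then $\chi_s((G,\sigma)\,\square\,(F,\pi))=\chi_s((G,\sigma)\,\square\,K_2^+)$. In particular, for all integers $n,m\ge 2$ and all signatures $\sigma_1$ of $P_n$ and $\sigma_2$ of $P_m$, $\chi_s((P_n,\sigma_1)\,\square\,(P_m,\sigma_2))=2$.
   Context: A signed graph $(G,\sigma)$ is a simple loopless undirected graph $G$ with a signature $\sigma:E(G)\to\{+1,-1\}$. Switching a vertex $v$ negates the sign of every edge incident to $v$; two signatures are equivalent if one is obtained from the other by switching a set of vertices. A homomorphism of $(G,\sigma)$ to $(H,\pi)$ is a graph homomorphism $\varphi:G\to H$ for which there is a signature $\sigma'$ equivalent to $\sigma$ with $\pi(\varphi(u)\varphi(v))=\sigma'(uv)$ for every edge $uv$ of $G$. $\chi_s(G,\sigma)$ is the smallest order of a signed graph to which $(G,\sigma)$ admits a homomorphism. The Cartesian product $(G,\sigma)\,\square\,(H,\pi)$ has vertex set $V(G)\times V(H)$, and $(u_1,v_1)(u_2,v_2)$ is an edge of sign $s$ iff either $u_1=u_2$ and $v_1v_2\in E(H)$ with $\pi(v_1v_2)=s$, or $v_1=v_2$ and $u_1u_2\in E(G)$ with $\sigma(u_1u_2)=s$. $K_2^+$ is a single positive edge; $P_n$ is the path on $n$ vertices. *)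

From Stdlib Require Import ClassicalEpsilon.
From mathcomp Require Import all_boot.
Set Implicit Arguments. Unset Strict Implicit. Unset Printing Implicit Defensive.

(* A finite signed graph: simple loopless graph on a finite vertex type, with a
   signature given as a symmetric boolean function on pairs of vertices
   (sgn x y = true means the edge xy is NEGATIVE; only values on edges matter). *)
Record sgraph := SGraph {
  V :> finType;
  adj : rel V;
  sgn : rel V;
  adj_sym : symmetric adj;
  adj_irr : irreflexive adj;
  sgn_sym : symmetric sgn }.

Definition switched (G : sgraph) (X : {set G}) (u v : G) : bool :=
  sgn u v (+) (u \in X) (+) (v \in X).

Definition shom (G H : sgraph) : Prop :=
  exists (phi : G -> H) (X : {set G}),
    forall u v : G, adj u v ->
      adj (phi u) (phi v) /\ sgn (phi u) (phi v) = switched X u v.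

Definition has_hom_of_order (G : sgraph) (n : nat) : bool :=
  if excluded_middle_informative (exists H : sgraph, #|H| = n /\ shom G H)
  then true else false.

Lemma shom_refl (G : sgraph) : shom G G.
Proof.
exists id, set0 => u v Huv; split => //.
by rewrite /switched !inE !addbF.
Qed.

Lemma has_hom_self (G : sgraph) : exists n, has_hom_of_order G n.
Proof.
exists #|G|; rewrite /has_hom_of_order.
case: excluded_middle_informative => // [[]].
by exists G; split => //; apply: shom_refl.
Qed.

Definition chi_s (G : sgraph) : nat := ex_minn (has_hom_self G).

Section Product.
Variables G H : sgraph.
Definition cp_adj : rel (G * H)%type := fun x y =>
  ((x.1 == y.1) && adj x.2 y.2) || ((x.2 == y.2) && adj x.1 y.1).
Definition cp_sgn : rel (G * H)%type := fun x y =>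
  if x.1 == y.1 then sgn x.2 y.2 else sgn x.1 y.1.
Lemma cp_adj_sym : symmetric cp_adj.
Proof. by move=> x y; rewrite /cp_adj eq_sym (eq_sym x.2) adj_sym (adj_sym x.1). Qed.
Lemma cp_adj_irr : irreflexive cp_adj.
Proof. by move=> x; rewrite /cp_adj !adj_irr !andbF. Qed.
Lemma cp_sgn_sym : symmetric cp_sgn.
Proof. by move=> x y; rewrite /cp_sgn eq_sym sgn_sym (sgn_sym x.1). Qed.
Definition cprod : sgraph := SGraph cp_adj_sym cp_adj_irr cp_sgn_sym.
End Product.
Notation "G \square H" := (cprod G H) (at level 40, left associativity).

Definition K2_adj : rel bool := fun x y => x != y.
Definition K2_sgn : rel bool := fun _ _ => false.
Lemma K2_adj_sym : symmetric K2_adj. Proof. by move=> x y; rewrite /K2_adj eq_sym. Qed.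
Lemma K2_adj_irr : irreflexive K2_adj. Proof. by move=> x; rewrite /K2_adj eqxx. Qed.
Lemma K2_sgn_sym : symmetric K2_sgn. Proof. by []. Qed.
Definition K2plus : sgraph := SGraph K2_adj_sym K2_adj_irr K2_sgn_sym.

Definition path_adj n : rel 'I_n := fun i j => (i.+1 == j :> nat) || (j.+1 == i :> nat).
Lemma path_adj_sym n : symmetric (@path_adj n).
Proof. by move=> i j; rewrite /path_adj orbC. Qed.
Lemma path_adj_irr n : irreflexive (@path_adj n).
Proof. by move=> i; rewrite /path_adj orbb gtn_eqF. Qed.
Definition Psg n (s : rel 'I_n) (hs : symmetric s) : sgraph :=
  SGraph (@path_adj_sym n) (@path_adj_irr n) hs.

(* Forests: no cycle (a sequence of >= 3 distinct vertices, consecutive ones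
   adjacent, last adjacent to first). *)
Definition is_forest (F : sgraph) : Prop :=
  forall (x : F) (p : seq F), uniq (x :: p) -> 2 <= size p ->
    path (@adj F) x p -> ~~ adj (last x p) x.

Definition has_edge (F : sgraph) : Prop := exists x y : F, adj x y.

From Stdlib Require Import ClassicalEpsilon.
From mathcomp Require Import all_boot.
Set Implicit Arguments. Unset Strict Implicit. Unset Printing Implicit Defensive.

(* A signed graph maps to K_2^+ exactly when it is bipartite and balanced, i.e.
   has a proper 2-colouring and a switching that makes every edge positive.
   Forests (peel off a leaf) and signed paths are such, and homomorphisms lift
   factorwise to Cartesian products, so G [] F and G [] K_2^+ map to each other
   whenever F is a forest with an edge; as chi_s is monotone under
   homomorphisms they have the same chi_s.  Likewise P_n [] P_m maps to
   K_2^+ [] K_2^+, a positive 4-cycle, hence to K_2^+, while any edge forces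
   chi_s >= 2. *)

Lemma adj_neq (G : sgraph) (u v : G) : adj u v -> u != v.
Proof. by apply: contraTneq => ->; rewrite adj_irr. Qed.

Lemma shom_trans (A B C : sgraph) : shom A B -> shom B C -> shom A C.
Proof.
move=> [phi [X homX]] [psi [Y homY]].
exists (psi \o phi), [set u | (u \in X) (+) (phi u \in Y)] => u v Auv /=.
have [Aphi sgn_phi] := homX u v Auv; have [Apsi sgn_psi] := homY _ _ Aphi.
split=> //; rewrite sgn_psi /switched sgn_phi /switched !inE.
by case: (sgn u v); case: (u \in X); case: (v \in X); case: (phi u \in Y); case: (phi v \in Y).
Qed.

Lemma has_hom_of_orderP (G : sgraph) (n : nat) :
  has_hom_of_order G n <-> exists H : sgraph, #|H| = n /\ shom G H.
Proof. by rewrite /has_hom_of_order; case: excluded_middle_informative. Qed.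

Lemma chi_s_hom (G : sgraph) : exists H : sgraph, #|H| = chi_s G /\ shom G H.
Proof. by rewrite /chi_s; case: ex_minnP => n /has_hom_of_orderP. Qed.

Lemma chi_s_min (G H : sgraph) : shom G H -> chi_s G <= #|H|.
Proof.
move=> homGH; rewrite /chi_s; case: ex_minnP => n _; apply.
by apply/has_hom_of_orderP; exists H.
Qed.

Lemma chi_s_le (A B : sgraph) : shom A B -> chi_s A <= chi_s B.
Proof.
move=> homAB; have [H [<- homBH]] := chi_s_hom B.
exact/chi_s_min/(shom_trans homAB).
Qed.

Lemma chi_s_gt1 (G : sgraph) : has_edge G -> 1 < chi_s G.
Proof.
move=> [u [v Auv]]; have [H [<- [phi [X homX]]]] := chi_s_hom G.
have [Aphi _] := homX u v Auv.
rewrite ltnNge; apply/negP => /fintype_le1P/(_ (phi u) (phi v)) Ephi.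
by move: Aphi; rewrite Ephi adj_irr.
Qed.

Lemma shom_cprod (A A' B B' : sgraph) :
  shom A A' -> shom B B' -> shom (A \square B) (A' \square B').
Proof.
move=> [phi [X homX]] [psi [Y homY]].
exists (fun u : A * B => (phi u.1, psi u.2)), [set u : A * B | (u.1 \in X) (+) (u.2 \in Y)].
move=> [a b] [a' b']; rewrite /= /cp_adj /switched /= !inE /cp_sgn /=.
case: (eqVneq a a') => [<- | ne_aa'] /=.
  rewrite adj_irr andbF orbF eqxx => Abb'; have [Apsi sgn_psi] := homY _ _ Abb'.
  rewrite Apsi sgn_psi /switched; split=> //.
  by case: (a \in X); case: (b \in Y); case: (b' \in Y); case: (sgn b b').
move=> /andP[/eqP <- Aaa']; have [Aphi sgn_phi] := homX _ _ Aaa'.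
rewrite eqxx Aphi (negbTE (adj_neq Aphi)) sgn_phi /switched; split=> //.
by case: (a \in X); case: (a' \in X); case: (b \in Y); case: (sgn a a').
Qed.

Lemma shom_K2plus_of_edge (F : sgraph) : has_edge F -> shom K2plus F.
Proof.
move=> [x [y Axy]].
exists (fun b : K2plus => if b then y else x), [set b : K2plus | b && sgn x y].
move=> [] [] //= _; rewrite /switched !inE /= ?addbF ?addbT ?addbb; split=> //.
- by rewrite adj_sym.
- by rewrite sgn_sym.
Qed.

(* The data of a homomorphism to K_2^+ of the subgraph induced on S. *)
Definition bipartite_balanced_on (F : sgraph) (S : {set F}) (c x : F -> bool) :=
  {in S &, forall a b, adj a b -> c a != c b /\ sgn a b = x a (+) x b}.

Lemma shom_K2plus (F : sgraph) (c x : F -> bool) :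
  bipartite_balanced_on [set: F] c x -> shom F K2plus.
Proof.
move=> cx; exists c, [set u | x u] => u v Auv.
have [ne_c sgn_x] := cx u v (in_setT u) (in_setT v) Auv.
by rewrite /switched !inE sgn_x -addbA addbb.
Qed.

Lemma shom_K2plus_square : shom (K2plus \square K2plus) K2plus.
Proof.
apply: (@shom_K2plus (K2plus \square K2plus) (fun u : bool * bool => u.1 (+) u.2) (fun => false)).
move=> [a b] [a' b'] _ _.
rewrite /= /cp_adj /K2_adj /cp_sgn /K2_sgn /=.
by case: a; case: b; case: a'; case: b'.
Qed.

Lemma forest_path_nbr_index0 (F : sgraph) (w z : F) (q : seq F) :
  is_forest F -> uniq (w :: q) -> path (@adj F) w q -> z \in q -> adj w z ->
  index z q = 0.
Proof.
move=> forestF Uwq Pwq zq Awz; apply/eqP; rewrite -leqn0 leqNgt; apply/negP => i_gt0.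
have size_pre : size (take (index z q).+1 q) = (index z q).+1.
  by rewrite size_takel // index_mem.
apply: (negP (forestF w (take (index z q).+1 q) _ _ (take_path _ Pwq))).
- by case/andP: Uwq => wq Uq; rewrite /= take_uniq // andbT; apply: contra wq; apply: mem_take.
- by rewrite size_pre.
- by rewrite (last_nth w) size_pre /= nth_take // nth_index // adj_sym.
Qed.

Lemma forest_leaf (F : sgraph) (S : {set F}) : is_forest F -> S != set0 ->
  exists2 v, v \in S & #|[set z in S | adj v z]| <= 1.
Proof.
(* Otherwise every vertex of S has two neighbours in S, at most one of which
   lies on a given duplicate-free path starting there, so such paths grow forever. *)
move=> forestF /set0Pn[w0 Sw0]; apply/exists_inP.
apply: contraT => /exists_inPn no_leaf.
have long_path k : exists w q,
    [/\ size q = k, uniq (w :: q), path (@adj F) w q & all (mem S) (w :: q)].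
  elim: k => [|k [w [q [size_q Uwq Pwq Swq]]]]; first by exists w0, [::]; rewrite /= Sw0.
  have Sw : w \in S by case/andP: Swq.
  have /card_gt1P[z1 [z2 [Nz1 Nz2 ne_z]]] : 1 < #|[set z in S | adj w z]|.
    by rewrite ltnNge no_leaf.
  move: Nz1 Nz2; rewrite !inE => /andP[Sz1 Awz1] /andP[Sz2 Awz2].
  have [z [Sz Awz fresh_z]] : exists z, [/\ z \in S, adj w z & z \notin w :: q].
    case: (boolP (z1 \in w :: q)) => [z1wq|]; last by exists z1.
    case: (boolP (z2 \in w :: q)) => [z2wq|]; last by exists z2.
    have in_q z : adj w z -> z \in w :: q -> z \in q.
      by move=> Awz; rewrite inE eq_sym (negbTE (adj_neq Awz)).
    have [z1q z2q] := (in_q _ Awz1 z1wq, in_q _ Awz2 z2wq).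
    case/negP: ne_z; apply/eqP.
    by rewrite -(nth_index w z1q) -(nth_index w z2q) !(forest_path_nbr_index0 forestF Uwq Pwq).
  exists z, (w :: q); split=> /=.
  - by rewrite size_q.
  - by rewrite fresh_z.
  - by rewrite adj_sym Awz.
  - by rewrite Sz.
have [w [q [size_q Uwq _ Swq]]] := long_path #|S|.
have : size (w :: q) <= size (enum S).
  by apply: uniq_leq_size => // y /(allP Swq); rewrite mem_enum.
by rewrite -cardE /= size_q ltnn.
Qed.

Lemma bipartite_balanced_on_leaf (F : sgraph) (S : {set F}) (v : F) (c x : F -> bool) :
  v \in S -> #|[set z in S | adj v z]| <= 1 -> bipartite_balanced_on (S :\ v) c x ->
  exists c' x', bipartite_balanced_on S c' x'.
Proof.
move=> Sv leaf_v cx.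
case: (pickP [pred z | (z \in S) && adj v z]) => [u /andP[Su Avu] | isolated_v].
  have only_u z : z \in S -> adj v z -> z = u.
    by move=> Sz Avz; apply: (card_le1_eqP leaf_v); rewrite inE ?Sz ?Su ?Avz ?Avu.
  have u_v : u != v by rewrite eq_sym; apply: adj_neq Avu.
  exists (fun z => if z == v then ~~ c u else c z),
         (fun z => if z == v then sgn v u (+) x u else x z) => a b Sa Sb Aab.
  case: (eqVneq a v) => [a_v | a_v]; case: (eqVneq b v) => [b_v | b_v].
  - by move: Aab; rewrite a_v b_v adj_irr.
  - subst a; rewrite (only_u _ Sb Aab).
    by case: (c u); rewrite -addbA addbb addbF.
  - subst b; rewrite adj_sym in Aab; rewrite (only_u _ Sa Aab) sgn_sym.
    by case: (c u); rewrite addbCA addbb addbF.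
  - by apply: cx; rewrite // !inE ?a_v ?b_v.
exists c, x => a b Sa Sb Aab; apply: cx; rewrite // !inE ?Sa ?Sb andbT.
- by apply/eqP => a_v; move: (isolated_v b); rewrite /= Sb -a_v Aab.
- by apply/eqP => b_v; move: (isolated_v a); rewrite /= Sa -b_v adj_sym Aab.
Qed.

Lemma forest_bipartite_balanced (F : sgraph) (S : {set F}) :
  is_forest F -> exists c x, bipartite_balanced_on S c x.
Proof.
move=> forestF; elim: {S}_.+1 {-2}S (ltnSn #|S|) => // n IH S size_S.
have [-> | S0] := eqVneq S set0; first by exists xpred0, xpred0 => a b; rewrite inE.
have [v Sv leaf_v] := forest_leaf forestF S0.
have size_Sv : #|S :\ v| < n by move: size_S; rewrite (cardsD1 v) Sv.
have [c [x cx]] := IH (S :\ v) size_Sv.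
exact: bipartite_balanced_on_leaf Sv leaf_v cx.
Qed.

Lemma forest_shom_K2plus (F : sgraph) : is_forest F -> shom F K2plus.
Proof. by move=> /(forest_bipartite_balanced [set: F])[c [x /shom_K2plus]]. Qed.

(* Sign of the edge {i, i+1} of P_n; junk value [false] when i+1 >= n. *)
Definition path_edge_sgn n (s : rel 'I_n) (i : nat) : bool :=
  if insub i is Some a then if insub i.+1 is Some b then s a b else false else false.

(* Parity of the negative edges of P_n before vertex i: switching there makes
   every edge positive. *)
Fixpoint path_switch n (s : rel 'I_n) (i : nat) : bool :=
  if i is i'.+1 then path_switch s i' (+) path_edge_sgn s i' else false.

Lemma path_bipartite_balanced n (s : rel 'I_n) (hs : symmetric s) :
  bipartite_balanced_on [set: Psg hs] (fun i : Psg hs => odd i) (path_switch s).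
Proof.
have succ_edge (i j : 'I_n) : i.+1 = j :> nat ->
    odd i != odd j /\ s i j = path_switch s i (+) path_switch s j.
  move=> ij; rewrite -ij /= /path_edge_sgn ij !valK addKb.
  by split=> //; case: (odd i).
move=> i j _ _ /orP[/eqP ij | /eqP ji]; first exact: succ_edge.
have [odd_ji sgn_ji] := succ_edge _ _ ji.
by rewrite eq_sym odd_ji /= hs sgn_ji addbC.
Qed.

Lemma path_shom_K2plus n (s : rel 'I_n) (hs : symmetric s) : shom (Psg hs) K2plus.
Proof. exact: shom_K2plus (path_bipartite_balanced (hs := hs)). Qed.

Lemma has_edge_path n (s : rel 'I_n) (hs : symmetric s) : 1 < n -> has_edge (Psg hs).
Proof. by move=> n_gt1; exists (Ordinal (ltnW n_gt1)), (Ordinal n_gt1). Qed.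

Lemma has_edge_cprod (A B : sgraph) : A -> has_edge B -> has_edge (A \square B).
Proof. by move=> a [x [y Axy]]; exists (a, x), (a, y); rewrite /= /cp_adj /= eqxx Axy. Qed.

Theorem corollary4p4 :
  (forall G F : sgraph, is_forest F -> has_edge F ->
     chi_s (G \square F) = chi_s (G \square K2plus)) /\
  (forall (n m : nat) (s1 : rel 'I_n) (h1 : symmetric s1)
          (s2 : rel 'I_m) (h2 : symmetric s2),
     2 <= n -> 2 <= m -> chi_s (Psg h1 \square Psg h2) = 2).
Proof.
split.
  move=> G F forestF edgeF; apply/eqP; rewrite eqn_leq !chi_s_le //.
    exact: shom_cprod (shom_refl G) (shom_K2plus_of_edge edgeF).
  exact: shom_cprod (shom_refl G) (forest_shom_K2plus forestF).
move=> n m s1 h1 s2 h2 n_gt1 m_gt1; apply/eqP; rewrite eqn_leq; apply/andP; split.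
  rewrite -[2]card_bool; apply: (chi_s_min (H := K2plus)).
  apply: shom_trans shom_K2plus_square.
  exact: shom_cprod (path_shom_K2plus h1) (path_shom_K2plus h2).
apply/chi_s_gt1/has_edge_cprod; [exact: Ordinal (ltnW n_gt1) | exact: has_edge_path h2 m_gt1].
Qed.
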